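(* Let $a,x\in \mathcal{A}$. Then the following are equivalent: (1) $x$ is the $w$-weighted core inverse of $a$. (2) $xwawx=x$, $(wawx)^*=wawx$, $x\mathcal{A}=(aw)\mathcal{A}$, $x^*\mathcal{A}=(waw)\mathcal{A}$. (3) $xwawx=x$, $(wawx)^*=wawx$, ${}^0(x)={}^0(aw)$, ${}^0(x^* )={}^0(waw)$. (4) $xwawx=x$, $(wawx)^*=wawx$, ${}^0(x)={}^0(aw)$, ${}^0(x^* )\subseteq {}^0(waw)$.
   Context: $\mathcal{A}$ is a complex Banach *-algebra with identity and $w\in\mathcal{A}$. The $w$-weighted core inverse of $a$ is the unique $x$ with $a(wx)^2=x$, $(wawx)^*=wawx$, $xw(aw)^2=aw$. ${}^0(b)=\{y\in\mathcal{A}: yb=0\}$ is the left annihilator of $b$. *)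

From mathcomp Require Import all_boot all_order all_algebra.
Set Implicit Arguments. Unset Strict Implicit. Unset Printing Implicit Defensive.
Import GRing.Theory.
Local Open Scope ring_scope.

(* An involution on a unital ring: additive, anti-multiplicative, involutive.
   (Every complex Banach *-algebra with identity is such a ring.) *)
Definition is_involution (R : pzRingType) (star : R -> R) : Prop :=
  [/\ forall x y : R, star (x + y) = star x + star y,
      forall x y : R, star (x * y) = star y * star x
    & forall x : R, star (star x) = x].

Definition w_core_inverse (R : pzRingType) (star : R -> R) (w a x : R) : Prop :=
  [/\ a * (w * x) ^+ 2 = x,
      star (w * a * w * x) = w * a * w * x
    & x * w * (a * w) ^+ 2 = a * w].

Definition lann (R : pzRingType) (b : R) : R -> Prop := fun y => y * b = 0.

Definition rideal (R : pzRingType) (b : R) : R -> Prop := fun z => exists t, z = b * t.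

Definition set_eq (R : Type) (P Q : R -> Prop) : Prop := forall z, P z <-> Q z.
Definition set_sub (R : Type) (P Q : R -> Prop) : Prop := forall z, P z -> Q z.

From mathcomp Require Import all_boot all_order all_algebra.
Set Implicit Arguments. Unset Strict Implicit. Unset Printing Implicit Defensive.
Import GRing.Theory.
Local Open Scope ring_scope.

(* From the core
   inverse axioms one gets x = x w a w x and a w = a w x w a w, which exhibit
   x and a w (and x^* and w a w) as right multiples of each other.  Conversely,
   an inclusion of left annihilators ^0(b) <= ^0(c) turns an identity e b = b
   into e c = c (apply it to 1 - e); used three times, it recovers the
   absorption identities a w = x w (a w)^2 and x = a (w x)^2. *)

Section Annihilators.
Variable R : pzRingType.

Lemma rideal_sub (b c : R) : rideal c b -> set_sub (rideal b) (rideal c).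
Proof. by case=> s -> _ [t ->]; exists (s * t); rewrite mulrA. Qed.

Lemma rideal_eq (b c : R) :
  rideal c b -> rideal b c -> set_eq (rideal b) (rideal c).
Proof. by move=> /rideal_sub bc /rideal_sub cb z; split=> [/bc|/cb]. Qed.

Lemma lann_eq_of_rideal_eq (b c : R) :
  set_eq (rideal b) (rideal c) -> set_eq (lann b) (lann c).
Proof.
move=> bc y.
have [t bct] : rideal c b by apply/bc; exists 1; rewrite mulr1.
have [s cbs] : rideal b c by apply/bc; exists 1; rewrite mulr1.
rewrite /lann; split=> [yb0|yc0].
- by rewrite cbs mulrA yb0 mul0r.
- by rewrite bct mulrA yc0 mul0r.
Qed.

Lemma lann_sub_fix (e b c : R) :
  set_sub (lann b) (lann c) -> e * b = b -> e * c = c.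
Proof.
move=> bc ebb; have /bc : lann b (1 - e) by rewrite /lann mulrBl mul1r ebb subrr.
by rewrite /lann mulrBl mul1r => /eqP; rewrite subr_eq0 => /eqP.
Qed.

End Annihilators.

Section WeightedCoreInverse.
Variables (R : pzRingType) (star : R -> R).
Hypothesis starM : forall y z : R, star (y * z) = star z * star y.
Variables w a x : R.

Lemma wcore_inverse_rideal :
  w_core_inverse star w a x ->
  [/\ x * w * a * w * x = x,
      star (w * a * w * x) = w * a * w * x,
      set_eq (rideal x) (rideal (a * w))
    & set_eq (rideal (star x)) (rideal (w * a * w))].
Proof.
case; rewrite !expr2 => x_eq wawx_sa aw_eq.
have xwawx : x * w * a * w * x = x.
  transitivity (x * w * (a * w * (a * w)) * (x * w * x)).
    by rewrite -{2}x_eq !mulrA.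
  by rewrite aw_eq -[RHS]x_eq !mulrA.
have awxwaw : a * w * x * w * (a * w) = a * w.
  transitivity (a * (w * x * (w * x)) * w * (a * w * (a * w))).
    by rewrite -{2}aw_eq !mulrA.
  by rewrite x_eq.
have star_x : w * a * w * x * star x = star x.
  by rewrite -wawx_sa -starM !mulrA xwawx.
split=> //; apply: rideal_eq.
- by exists (x * w * x); rewrite -{1}x_eq !mulrA.
- by exists (w * a * w * a * w); rewrite -{1}aw_eq !mulrA.
- by exists (x * star x); rewrite -{1}star_x !mulrA.
exists (star (w * a * w) * (w * a * w)).
rewrite mulrA -starM !mulrA wawx_sa.
transitivity (w * (a * w * x * w * (a * w))); first by rewrite awxwaw mulrA.
by rewrite !mulrA.
Qed.

Lemma wcore_inverse_of_lann :
  [/\ x * w * a * w * x = x,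
      star (w * a * w * x) = w * a * w * x,
      set_eq (lann x) (lann (a * w))
    & set_sub (lann (star x)) (lann (w * a * w))] ->
  w_core_inverse star w a x.
Proof.
case=> xwawx wawx_sa x_aw sx_waw.
have x_sub_aw : set_sub (lann x) (lann (a * w)) by move=> z /x_aw.
have aw_sub_x : set_sub (lann (a * w)) (lann x) by move=> z /x_aw.
have aw_eq : x * w * a * w * (a * w) = a * w.
  exact: lann_sub_fix x_sub_aw xwawx.
have waw_eq : w * a * w * x * (w * a * w) = w * a * w.
  apply: (lann_sub_fix sx_waw).
  by rewrite -{1}wawx_sa -starM !mulrA xwawx.
have awxwaw : a * w * x * w * (a * w) = a * w.
  rewrite -{1}aw_eq !mulrA.
  have -> : x * w * a * w * a * w * x * w * a * w =
            x * w * a * (w * a * w * x * (w * a * w)) by rewrite !mulrA.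
  by rewrite waw_eq -[RHS]aw_eq !mulrA.
have x_eq : a * w * x * w * x = x by exact: lann_sub_fix aw_sub_x awxwaw.
split=> //; rewrite expr2 !mulrA; first exact: x_eq.
by rewrite -[RHS]aw_eq !mulrA.
Qed.

End WeightedCoreInverse.

Theorem theorem2p1 (R : pzRingType) (star : R -> R) (w a x : R) :
  is_involution star ->
  (w_core_inverse star w a x <->
   [/\ x * w * a * w * x = x,
       star (w * a * w * x) = w * a * w * x,
       set_eq (rideal x) (rideal (a * w))
     & set_eq (rideal (star x)) (rideal (w * a * w))]) /\
  (w_core_inverse star w a x <->
   [/\ x * w * a * w * x = x,
       star (w * a * w * x) = w * a * w * x,
       set_eq (lann x) (lann (a * w))
     & set_eq (lann (star x)) (lann (w * a * w))]) /\
  (w_core_inverse star w a x <->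
   [/\ x * w * a * w * x = x,
       star (w * a * w * x) = w * a * w * x,
       set_eq (lann x) (lann (a * w))
     & set_sub (lann (star x)) (lann (w * a * w))]).
Proof.
case=> _ starM _.
have to_rideal := wcore_inverse_rideal starM (w := w) (a := a) (x := x).
have of_lann := wcore_inverse_of_lann starM (w := w) (a := a) (x := x).
split; [|split]; split.
- exact: to_rideal.
- case=> ? ? /lann_eq_of_rideal_eq ? /lann_eq_of_rideal_eq sx_waw.
  by apply: of_lann; split=> // z /sx_waw.
- by case/to_rideal=> ? ? /lann_eq_of_rideal_eq ? /lann_eq_of_rideal_eq ?.
- by case=> ? ? ? sx_waw; apply: of_lann; split=> // z /sx_waw.
- case/to_rideal=> ? ? /lann_eq_of_rideal_eq ? /lann_eq_of_rideal_eq sx_waw.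
  by split=> // z /sx_waw.
- exact: of_lann.
Qed.
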